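(* Let $k\ge 1$ be an integer and let $G$ be a graph with minimum degree $\delta(G)\ge k$. Then $G$ has a total $k$-coalition partition.
   Context: All graphs are finite, simple and connected. $N(v)$ denotes the open neighborhood of a vertex $v$. For a graph $G$ with $\delta(G)\ge k$, a set $S\subseteq V(G)$ is a total $k$-dominating set if $|N(v)\cap S|\ge k$ for every $v\in V(G)$. Two disjoint sets $U,W\subseteq V(G)$ form a total $k$-coalition if neither $U$ nor $W$ is a total $k$-dominating set, but $U\cup W$ is a total $k$-dominating set. A total $k$-coalition partition of $G$ is a partition $\Omega=\{V_1,\dots,V_{|\Omega|}\}$ of $V(G)$ such that every $V_i$ forms a total $k$-coalition with some other set $V_j\in\Omega$. *)

From mathcomp Require Import all_boot.
Set Implicit Arguments. Unset Strict Implicit. Unset Printing Implicit Defensive.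

Definition simple_graph (T : finType) (e : rel T) : Prop :=
  symmetric e /\ irreflexive e.

Definition connected_graph (T : finType) (e : rel T) : Prop :=
  forall x y : T, connect e x y.

Definition nbhd (T : finType) (e : rel T) (v : T) : {set T} := [set u | e v u].

Definition min_deg_ge (T : finType) (e : rel T) (k : nat) : Prop :=
  forall v : T, k <= #|nbhd e v|.

Definition total_k_dom (T : finType) (e : rel T) (k : nat) (S : {set T}) : Prop :=
  forall v : T, k <= #|nbhd e v :&: S|.

Definition total_k_coalition (T : finType) (e : rel T) (k : nat) (U W : {set T}) : Prop :=
  [disjoint U & W] /\ ~ total_k_dom e k U /\ ~ total_k_dom e k W /\
  total_k_dom e k (U :|: W).

Definition total_k_coalition_partition (T : finType) (e : rel T) (k : nat)
    (P : {set {set T}}) : Prop :=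
  partition P [set: T] /\
  forall Vi, Vi \in P -> exists2 Vj, Vj \in P & Vj != Vi /\ total_k_coalition e k Vi Vj.

From mathcomp Require Import all_boot.
Set Implicit Arguments. Unset Strict Implicit. Unset Printing Implicit Defensive.

(* Start from the partition into singletons: none of them is total
   k-dominating, since v is not in N(v) and k >= 1.  As long as two blocks have
   a union that is not total k-dominating, merge them.  When this stops, no
   block is total k-dominating but the union of any two blocks is; and there
   are at least two blocks, because V itself is total k-dominating when
   delta(G) >= k.  So each block forms a total k-coalition with any other one. *)

Section TotalCoalitionPartition.
Variables (T : finType) (e : rel T) (k : nat).

(* Partitions of V are encoded by labellings f : T -> T; the blocks are the
   fibres, in the form used by [preim_partition]. *)
Definition label_class (f : T -> T) (x : T) : {set T} :=
  [set y in [set: T] | f x == f y].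

Definition total_k_domb (S : {set T}) : bool :=
  [forall v, k <= #|nbhd e v :&: S|].

Lemma total_k_domP S : reflect (total_k_dom e k S) (total_k_domb S).
Proof. exact: (iffP forallP). Qed.

Lemma total_k_domS (S S' : {set T}) :
  S \subset S' -> total_k_dom e k S -> total_k_dom e k S'.
Proof.
by move=> sSS' domS v; apply: leq_trans (domS v) _; apply/subset_leq_card/setIS.
Qed.

Lemma total_k_dom_setT : min_deg_ge e k -> total_k_dom e k [set: T].
Proof. by move=> mindeg v; rewrite setIT. Qed.

Lemma set1_not_total_k_dom x :
  irreflexive e -> 0 < k -> ~ total_k_dom e k [set x].
Proof.
move=> irr_e k_gt0 /(_ x).
have -> : nbhd e x :&: [set x] = set0.
  by apply/setP => y; rewrite !inE; case: eqP => [->|_]; rewrite ?irr_e ?andbF.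
by rewrite cards0 leqNgt k_gt0.
Qed.

Definition merge_labels (f : T -> T) (a b : T) : T -> T :=
  fun y => if f y == b then a else f y.

Lemma merge_labels_eq f x x' y :
  (merge_labels f (f x) (f x') y == f x) = (f y == f x) || (f y == f x').
Proof. by rewrite /merge_labels; case: ifP; rewrite ?eqxx ?orbT ?orbF. Qed.

Lemma label_class_merge f x x' z :
  (f z == f x) || (f z == f x') ->
  label_class (merge_labels f (f x) (f x')) z =
  label_class f x :|: label_class f x'.
Proof.
move=> zxx'; have /eqP merged_z : merge_labels f (f x) (f x') z == f x.
  by rewrite merge_labels_eq.
by apply/setP => y; rewrite !inE merged_z eq_sym merge_labels_eq !(eq_sym (f y)).
Qed.

Lemma label_class_merge_other f x x' z :
  f z != f x -> f z != f x' ->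
  label_class (merge_labels f (f x) (f x')) z = label_class f z.
Proof.
move=> zx zx'; apply/setP => y; rewrite !inE /merge_labels (negbTE zx').
by case: ifP => // /eqP ->; rewrite (negbTE zx) (negbTE zx').
Qed.

Lemma card_merge_labels f x x' : f x != f x' ->
  #|[set merge_labels f (f x) (f x') y | y in T]| < #|[set f y | y in T]|.
Proof.
move=> xx'; rewrite [X in _ < X](cardsD1 (f x')) imset_f // add1n ltnS.
apply: subset_leq_card.
apply/subsetP => _ /imsetP [y _ ->]; rewrite /merge_labels !inE.
by case: ifP => [_ | /negbT ->]; rewrite ?xx' imset_f.
Qed.

Lemma exists_coalition_labelling f :
    (forall x, ~ total_k_dom e k (label_class f x)) ->
  exists g : T -> T,
    (forall x, ~ total_k_dom e k (label_class g x)) /\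
    (forall x x', g x != g x' ->
       total_k_dom e k (label_class g x :|: label_class g x')).
Proof.
have [n] := ubnP #|[set f y | y in T]|; elim: n f => // n IHn f /ltnSE le_f_n.
move=> not_dom.
have [/existsP [x /existsP [x' /andP [xx' not_dom_xx']]] | all_dom] :=
  boolP [exists x, exists x', (f x != f x') &&
           ~~ total_k_domb (label_class f x :|: label_class f x')].
- apply: (IHn (merge_labels f (f x) (f x'))).
    exact: leq_trans (card_merge_labels xx') le_f_n.
  move=> z; have [zxx' | zx_zx'] := boolP ((f z == f x) || (f z == f x')).
    by rewrite label_class_merge // => /total_k_domP; apply/negP.
  move: zx_zx'; rewrite negb_or => /andP [zx zx'].
  by rewrite label_class_merge_other //; apply: not_dom.
- exists f; split=> // x x' xx'; apply/total_k_domP.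
  apply: contraNT all_dom => not_dom_xx'.
  by apply/existsP; exists x; apply/existsP; exists x'; rewrite xx'.
Qed.

Lemma coalition_partition_of_labelling (g : T -> T) :
    min_deg_ge e k ->
    (forall x, ~ total_k_dom e k (label_class g x)) ->
    (forall x x', g x != g x' ->
       total_k_dom e k (label_class g x :|: label_class g x')) ->
  total_k_coalition_partition e k (preim_partition g [set: T]).
Proof.
move=> mindeg not_dom dom2; split; first exact: preim_partitionP.
move=> _ /imsetP [x _ ->].
have [/existsP [x' gxx'] | /existsPn same_label] := boolP [exists x', g x != g x'];
  last first.
  case: (not_dom x); apply: total_k_domS (total_k_dom_setT mindeg).
  by apply/subsetP => y _; rewrite !inE; apply/negbNE/same_label.
exists (label_class g x'); first by apply: imset_f.
split.
  by apply: contraNneq gxx' => /setP /(_ x'); rewrite !inE eqxx !andTb => <-.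
split; last by do !split; [apply: not_dom | apply: not_dom | apply: dom2].
rewrite -setI_eq0; apply/eqP/setP => y; rewrite !inE !andTb.
by apply/negbTE/negP => /andP [/eqP gxy /eqP gx'y]; rewrite gxy gx'y eqxx in gxx'.
Qed.

End TotalCoalitionPartition.

Theorem proposition2p1 (T : finType) (e : rel T) (k : nat) :
  simple_graph e -> connected_graph e -> 1 <= k -> min_deg_ge e k ->
  exists P : {set {set T}}, total_k_coalition_partition e k P.
Proof.
move=> [_ irr_e] _ k_gt0 mindeg.
have singletons : forall x, ~ total_k_dom e k (label_class id x).
  move=> x; have -> : label_class id x = [set x].
    by apply/setP => y; rewrite !inE eq_sym.
  exact: set1_not_total_k_dom.
have [g [not_dom dom2]] := exists_coalition_labelling singletons.
by exists (preim_partition g [set: T]); apply: coalition_partition_of_labelling.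
Qed.
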